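(* Let $S=\{s_1,\dots,s_n\}$ be a finite poset whose Hasse graph $\Gamma(S)$ is acyclic (a forest), and suppose at least one of the forms $f_S$, $\mathcal T_S$ is positive definite. Then the other one is positive definite as well, and the following are equivalent: (a) $C(f_S)=\varnothing$ ($S$ is antimonotonous); (b) $\widetilde{\mathrm{St}}(f_S)\ne\varnothing$ ($S$ is $P$-faithful); (c) $\mathrm{St}(f_S)\ne\varnothing$.
   Context: $f_S(x)=\sum_{(i,j):\,s_i\le s_j}x_ix_j=\sum_i x_i^2+\sum_{s_i<s_j}x_ix_j$. The Hasse graph $\Gamma(S)$ has vertex set $S$ and an edge $s_i - s_j$ when one of them covers the other; the Tits form is $\mathcal T_S(x)=\sum_i x_i^2-\sum_{\text{edges } s_i - s_j}x_ix_j$. $H_n=\{x:\sum x_i=0\}$; $C(f)$ is the set of $h\in H_n\setminus\{0\}$ with either all $\partial f/\partial x_i(h)\le0$ or all $\ge0$. $\mathrm{St}(f)=\{a: a_i>0\ \forall i,\ \partial f/\partial x_i(a)$ independent of $i\}$. With $P_n=\{x:x_i>0,\sum x_i=1\}$ and $\overline P_n=\{x:x_i\ge0,\sum x_i=1\}$, $\widetilde{\mathrm{St}}(f)$ is the set of $u\in P_n$ with $f(u)>0$, $f(u)\le f(w)$ for all $w\in\overline P_n$, and $f(u)<f(w)$ for $w\in\overline P_n\setminus P_n$. *)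

From HB Require Import structures.
From mathcomp Require Import all_boot all_order all_algebra.
From mathcomp Require Import all_classical all_reals all_analysis.
Set Implicit Arguments. Unset Strict Implicit. Unset Printing Implicit Defensive.
Import Order.TTheory GRing.Theory Num.Theory.
Local Open Scope ring_scope.

Section Defs.
Variables (R : realType) (n : nat).

Definition is_poset (le : rel 'I_n) : Prop :=
  [/\ forall i, le i i,
      forall i j, le i j -> le j i -> i = j
    & forall i j k, le i j -> le j k -> le i k].

Definition ltS (le : rel 'I_n) (i j : 'I_n) : bool := (i != j) && le i j.

Definition covers (le : rel 'I_n) (i j : 'I_n) : bool :=
  ltS le i j && [forall k, ~~ (ltS le i k && ltS le k j)].

Definition hasse_edge (le : rel 'I_n) : rel 'I_n :=
  fun i j => covers le i j || covers le j i.

Definition hasse_acyclic (le : rel 'I_n) : Prop :=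
  forall s : seq 'I_n, uniq s -> (2 < size s)%N -> ~~ cycle (hasse_edge le) s.

Definition fS (le : rel 'I_n) (x : 'I_n -> R) : R :=
  \sum_i \sum_j (if le i j then x i * x j else 0).

(* Tits form: sum x_i^2 - sum over edges {s_i,s_j} of x_i x_j
   (each edge counted once, as the pair (i,j) with s_j covering s_i) *)
Definition titsS (le : rel 'I_n) (x : 'I_n -> R) : R :=
  \sum_i x i ^+ 2 - \sum_i \sum_j (if covers le i j then x i * x j else 0).

Definition pos_def (q : ('I_n -> R) -> R) : Prop :=
  forall x : 'I_n -> R, (exists i, x i != 0) -> 0 < q x.

Definition partial (f : ('I_n -> R) -> R) (i : 'I_n) (a : 'I_n -> R) : R :=
  derive1 (fun t : R => f (fun j => a j + (if j == i then t else 0))) 0.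

Definition inH (x : 'I_n -> R) : Prop := \sum_i x i = 0.

Definition inC (f : ('I_n -> R) -> R) (h : 'I_n -> R) : Prop :=
  [/\ inH h, exists i, h i != 0 &
      (forall i, partial f i h <= 0) \/ (forall i, 0 <= partial f i h)].

Definition inSt (f : ('I_n -> R) -> R) (a : 'I_n -> R) : Prop :=
  (forall i, 0 < a i) /\ (forall i j, partial f i a = partial f j a).

Definition inP (x : 'I_n -> R) : Prop := (forall i, 0 < x i) /\ \sum_i x i = 1.
Definition inPbar (x : 'I_n -> R) : Prop := (forall i, 0 <= x i) /\ \sum_i x i = 1.

Definition inStt (f : ('I_n -> R) -> R) (u : 'I_n -> R) : Prop :=
  [/\ inP u, 0 < f u,
      forall w, inPbar w -> f u <= f w
    & forall w, inPbar w -> ~ inP w -> f u < f w].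

End Defs.

From mathcomp Require Import all_boot all_order all_algebra.
From mathcomp Require Import all_classical all_reals all_analysis.
From mathcomp Require Import ring lra.
Set Implicit Arguments. Unset Strict Implicit. Unset Printing Implicit Defensive.
Import Order.TTheory GRing.Theory Num.Theory.

(* Since the Hasse graph is a forest, whenever s_i < s_k there is exactly one s_j with
   s_i <= s_j covered by s_k: two of them, joined by covering chains to a maximal common
   lower bound, would close a cycle.  So the Moebius function of S vanishes off the
   diagonal and the covering pairs, [mobius] inverts the zeta transform [zeta], and
   T_S(x) = f_S(mobius x): the two forms are congruent, hence positive definite together.

   The rest is linear algebra of the positive definite form f_S, whose gradient map is
   invertible.  If a > 0 has constant gradient, then f_S(w) = f_S(u) + f_S(w - u) on the
   simplex for u = a / sum a, so u is the strict minimiser; conversely an interior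
   minimiser has constant gradient.  For h in C(f_S), sum_i a_i d_i f_S(h) = c sum_i h_i = 0
   forces the gradient of h, which has constant sign, and then h itself to vanish.  If
   St(f_S) is empty, the solution v of grad f_S(v) = 1 has coordinates v_k <= 0 < v_j, and
   the h with grad f_S(h) = v_j e_k - v_k e_j lies in C(f_S). *)

Section Poset.
Variables (n : nat) (le : rel 'I_n).
Hypothesis le_poset : is_poset le.

Let le_refl : reflexive le. Proof. by case: le_poset. Qed.
Let le_anti i j : le i j -> le j i -> i = j. Proof. by case: le_poset => _ + _; apply. Qed.
Let le_trans : transitive le. Proof. by case: le_poset => _ _ t j i k; apply: t. Qed.

Lemma ltS_le i j : ltS le i j -> le i j. Proof. by case/andP. Qed.

Lemma ltS_irr : irreflexive (ltS le). Proof. by move=> i; rewrite /ltS eqxx. Qed.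

Lemma ltS_trans : transitive (ltS le).
Proof.
move=> j i k /andP[nij lij] /andP[njk ljk]; rewrite /ltS (le_trans lij ljk) andbT.
by apply: contraNneq nij => eik; subst k; rewrite (le_anti lij ljk).
Qed.

Lemma le_ltS_trans i j k : le i j -> ltS le j k -> ltS le i k.
Proof.
move=> ij /andP[njk jk]; rewrite /ltS (le_trans ij jk) andbT.
by apply: contraNneq njk => eik; subst k; rewrite (le_anti jk ij).
Qed.

Lemma covers_ltS i j : covers le i j -> ltS le i j. Proof. by case/andP. Qed.

Lemma ex_maximal (P : pred 'I_n) x : P x ->
  exists m, [/\ P m, le x m & forall w, P w -> ~~ ltS le m w].
Proof.
move=> Px; have Qx : (P x && le x x) by rewrite Px le_refl.
case: (@arg_maxnP _ x (fun w => P w && le x w) (fun m => #|[pred v | le v m]|) Qx).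
move=> m /andP[Pm xm] mmax.
exists m; split=> // w Pw; apply/negP=> /andP[nmw mw].
have := mmax w; rewrite Pw (le_trans xm mw) => /(_ isT) /=; rewrite leqNgt => /negP; apply.
apply: proper_card; apply/fintype.properP; split.
  by apply/fintype.subsetP => v; rewrite !inE => /le_trans; apply.
by exists w; rewrite !inE ?le_refl //; apply: contra nmw => /(le_anti mw) ->.
Qed.

Lemma ex_cover_between i k : ltS le i k -> exists2 j, le i j & covers le j k.
Proof.
move=> ik; have ii : le i i && ltS le i k by rewrite le_refl.
have [m [/andP[im mk] _ mmax]] := ex_maximal (P := fun w => le i w && ltS le w k) ii.
exists m => //; rewrite /covers mk; apply/forallP => w; apply/negP => /andP[mw wk].
by have := mmax w; rewrite wk (ltS_le (le_ltS_trans im mw)) mw => /(_ isT).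
Qed.

Lemma ex_cover_path x y : le x y -> exists2 s, path (covers le) x s & last x s = y.
Proof.
elim: {y}_.+1 {-2}y (ltnSn #|[pred w | ltS le w y]|) => // N IH y hN xy.
have [<-|nxy] := eqVneq x y; first by exists [::].
have [j xj jy] := ex_cover_between (introT andP (conj nxy xy)).
have [|s ps lj] := IH j _ xj; last first.
  by exists (rcons s y); rewrite ?rcons_path ?ps ?lj ?jy ?last_rcons.
rewrite -ltnS; apply: leq_trans hN; rewrite ltnS; apply: proper_card.
apply/fintype.properP; split.
  by apply/fintype.subsetP => v; rewrite !inE => /ltS_trans; apply; apply: covers_ltS.
by exists j; rewrite !inE ?ltS_irr ?covers_ltS.
Qed.

Lemma covers_no_between i j k : covers le i k -> ltS le i j -> ltS le j k -> False.
Proof. by case/andP=> _ /forallP/(_ j); rewrite negb_and => /orP[]/negP. Qed.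

Lemma cover_path_ltS x s : path (covers le) x s -> path (ltS le) x s.
Proof. by apply: sub_path => a b; apply: covers_ltS. Qed.

Lemma cover_path_hasse x s : path (covers le) x s -> path (hasse_edge le) x s.
Proof. by apply: sub_path => a b c; rewrite /hasse_edge c. Qed.

Lemma cover_path_uniq x s : path (covers le) x s -> uniq (x :: s).
Proof. by move/cover_path_ltS; apply: (sorted_uniq ltS_trans ltS_irr (s := x :: s)). Qed.

Lemma cover_path_le_last x s z : path (covers le) x s -> z \in x :: s -> le z (last x s).
Proof.
elim: s x z => [|y s IH] x z /=; first by rewrite inE => _ /eqP->.
move=> /andP[/covers_ltS/ltS_le xy ps]; rewrite inE => /predU1P[->|/IH]; last exact.
exact: le_trans xy (IH _ _ ps (mem_head _ _)).
Qed.

Hypothesis le_acyclic : hasse_acyclic le.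

Lemma cover_paths_cycle m k s1 s2 :
  path (covers le) m (rcons s1 k) -> path (covers le) m (rcons s2 k) ->
  cycle (hasse_edge le) (m :: s1 ++ k :: rev s2).
Proof.
move=> p1 p2; rewrite /cycle rcons_cat rcons_cons -rev_cons -cat_rcons cat_path.
rewrite cover_path_hasse //= last_rcons.
have := rev_path (hasse_edge le) m (rcons s2 k); rewrite last_rcons belast_rcons => ->.
rewrite (@eq_path _ _ (hasse_edge le)) ?cover_path_hasse // => a b.
by rewrite /hasse_edge orbC.
Qed.

Lemma cover_between_unique i k j1 j2 :
  le i j1 -> covers le j1 k -> le i j2 -> covers le j2 k -> j1 = j2.
Proof.
move=> ij1 c1 ij2 c2; have [//|nj12] := eqVneq j1 j2; exfalso.
have ii : le i j1 && le i j2 by rewrite ij1.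
have [m [/andP[mj1 mj2] _ mmax]] := ex_maximal (P := fun w => le w j1 && le w j2) ii.
have nm2 : m != j2.
  apply/eqP => em; subst m; apply: (covers_no_between c2) (covers_ltS c1).
  by rewrite /ltS eq_sym nj12.
have [s1 p1 l1] := ex_cover_path mj1; have [s2 p2 l2] := ex_cover_path mj2.
have q1 : path (covers le) m (rcons s1 k) by rewrite rcons_path p1 l1.
have q2 : path (covers le) m (rcons s2 k) by rewrite rcons_path p2 l2.
have disj z : z \in s1 -> z \notin s2.
  move=> z1; apply/negP => z2.
  have /allP/(_ z z1) mz := order_path_min ltS_trans (cover_path_ltS p1).
  have le_z j s : z \in s -> path (covers le) m s -> last m s = j -> le z j.
    by move=> zs ps <-; apply: cover_path_le_last ps _; rewrite inE zs orbT.
  by have := mmax z; rewrite (le_z _ _ z1 p1 l1) (le_z _ _ z2 p2 l2) mz => /(_ isT).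
have uniq_cycle : uniq (m :: s1 ++ k :: rev s2).
  rewrite -cat_rcons -cat_cons cat_uniq cover_path_uniq //= rev_uniq.
  have := cover_path_uniq q2; rewrite /= mem_rcons inE negb_or rcons_uniq.
  case/and3P => /andP[_ ms2] ks2 ->; rewrite andbT.
  apply/hasPn => z; rewrite mem_rev => zs2; rewrite !(in_cons, mem_rcons) !negb_or.
  rewrite (memPn ms2 z zs2) (memPn ks2 z zs2) /=.
  by apply/negP => /disj; rewrite zs2.
have size_cycle : (2 < size (m :: s1 ++ k :: rev s2))%N.
  have s2n : (0 < size s2)%N.
    by rewrite lt0n size_eq0; apply: contraNneq nm2 => s2e; rewrite -l2 s2e.
  by rewrite /= size_cat /= size_rev addnS !ltnS addn_gt0 s2n orbT.
by case/negP: (le_acyclic uniq_cycle size_cycle); apply: cover_paths_cycle.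
Qed.

Lemma card_cover_between i k : #|[pred j | le i j && covers le j k]| = ltS le i k.
Proof.
have [ik|nik] := boolP (ltS le i k).
  have [j0 ij0 c0] := ex_cover_between ik.
  apply: (@fintype.eq_card1 _ j0) => j; rewrite !inE; apply/andP/eqP => [[ij cj]|->//].
  exact: cover_between_unique ij cj ij0 c0.
apply: eq_card0 => j; rewrite !inE; apply: contraNF nik => /andP[ij cj].
exact: le_ltS_trans ij (covers_ltS cj).
Qed.

End Poset.

Lemma dual_poset n (le : rel 'I_n) : is_poset le -> is_poset [rel a b | le b a].
Proof.
case=> r a t; split=> // [i j ij ji | i j k ij jk]; first exact: a ji ij.
exact: t jk ij.
Qed.

Lemma covers_dual n (le : rel 'I_n) a b : covers [rel x y | le y x] a b = covers le b a.
Proof.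
rewrite /covers /ltS /= eq_sym; congr (_ && _); apply: eq_forallb => k.
by rewrite andbC !(eq_sym k).
Qed.

Lemma hasse_acyclic_dual n (le : rel 'I_n) :
  hasse_acyclic le -> hasse_acyclic [rel a b | le b a].
Proof.
move=> le_acyclic s s_uniq s_size.
have dual_edge : hasse_edge [rel a b | le b a] =2 hasse_edge le.
  by move=> a b; rewrite /hasse_edge (covers_dual le a b) (covers_dual le b a) orbC.
by rewrite (eq_cycle dual_edge); apply: le_acyclic.
Qed.

Lemma card_covered_between n (le : rel 'I_n) j i :
  is_poset le -> hasse_acyclic le -> #|[pred k | covers le j k && le k i]| = ltS le j i.
Proof.
move=> le_poset le_acyclic; have -> : ltS le j i = ltS [rel a b | le b a] i j.
  by rewrite /ltS eq_sym.
rewrite -(card_cover_between (dual_poset le_poset) (hasse_acyclic_dual le_acyclic)).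
by apply: eq_card => k; rewrite !inE covers_dual andbC.
Qed.

Local Open Scope ring_scope.

Lemma exists_neq0P (R : numDomainType) n (x : 'I_n -> R) :
  (exists i, x i != 0) <-> ~ (forall i, x i = 0).
Proof.
split=> [[i /eqP xi] x0 | /existsNP[i /eqP]]; last by exists i.
exact: xi (x0 i).
Qed.

Lemma pos_mul_sum_eq0 (R : numDomainType) n (a b : 'I_n -> R) :
  (forall i, 0 < a i) -> (forall i, 0 <= b i) -> \sum_i a i * b i = 0 ->
  forall i, b i = 0.
Proof.
move=> a_gt0 b_ge0 ab0 i.
have /(_ i isT)/eqP : forall i, true -> a i * b i = 0.
  by apply/psumr_eq0P => // k _; rewrite mulr_ge0 // ltW.
by rewrite mulf_eq0 gt_eqF //= => /eqP.
Qed.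

Lemma row_inj_surj (F : fieldType) n (A : 'M[F]_n) :
  (forall v : 'rV_n, v *m A = 0 -> v = 0) -> forall b : 'rV_n, exists v, v *m A = b.
Proof.
move=> A_inj b; have A_unit : A \in unitmx by rewrite -row_free_unit; apply/inj_row_free.
by exists (b *m invmx A); rewrite mulmxKV.
Qed.

Section Forms.
Variables (R : realType) (n : nat) (le : rel 'I_n).

Definition zeta (y : 'I_n -> R) i := \sum_(j | le i j) y j.

Definition mobius (x : 'I_n -> R) i := x i - \sum_(j | covers le i j) x j.

Definition gradS (a : 'I_n -> R) i := \sum_(j | le i j) a j + \sum_(j | le j i) a j.

Definition polarS (h u : 'I_n -> R) := \sum_i h i * gradS u i.

Definition gramS : 'M[R]_n := \matrix_(i, j) ((le j i)%:R + (le i j)%:R).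

Lemma fS_zeta y : fS le y = \sum_i y i * zeta y i.
Proof. by apply: eq_bigr => i _; rewrite /zeta mulr_sumr [RHS]big_mkcond. Qed.

Lemma polarSE h u :
  polarS h u = \sum_i \sum_j (if le i j then h i * u j + u i * h j else 0).
Proof.
rewrite /polarS /gradS; under eq_bigr do rewrite mulrDr !mulr_sumr.
rewrite big_split /= [X in _ + X](exchange_big_dep predT) //= -big_split /=.
apply: eq_bigr => i _; rewrite -big_split big_mkcond /=; apply: eq_bigr => j _.
by case: ifP => // _; rewrite [h j * _]mulrC.
Qed.

Lemma polarSC h u : polarS h u = polarS u h.
Proof.
by rewrite !polarSE; apply: eq_bigr => i _; apply: eq_bigr => j _; rewrite addrC.
Qed.

Lemma polarSii h : polarS h h = fS le h *+ 2.
Proof.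
rewrite polarSE mulr2n /fS -big_split; apply: eq_bigr => i _; rewrite -big_split.
by apply: eq_bigr => j _; case: ifP => _ /=; rewrite ?addr0.
Qed.

Lemma fS_shift u h t :
  fS le (fun j => u j + t * h j) = fS le u + t * polarS h u + t ^+ 2 * fS le h.
Proof.
rewrite polarSE /fS !mulr_sumr -!big_split; apply: eq_bigr => i _.
rewrite !mulr_sumr -!big_split; apply: eq_bigr => j _ /=.
by case: ifP => _; [ring | rewrite !mulr0 !addr0].
Qed.

Lemma partial_fS i a : partial (fS le) i a = gradS a i.
Proof.
rewrite /partial; set e := fun j : 'I_n => if j == i then 1 else 0 : R.
have -> : (fun t => fS le (fun j => a j + (if j == i then t else 0))) =
          (fun t => fS le a + t * polarS e a + t ^+ 2 * fS le e).
  apply: funext => t; rewrite -fS_shift; congr (fS le _); apply: funext => j.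
  by rewrite /e; case: ifP; rewrite ?mulr1 ?mulr0.
have -> : polarS e a = gradS a i.
  rewrite /polarS; under eq_bigr do rewrite (fun_if (fun v => v * gradS a _)) mul1r mul0r.
  by rewrite -big_mkcond big_pred1_eq.
rewrite derive1E deriveD //= ?deriveM //= ?deriveD //= ?deriveM //=.
by rewrite ?derive_cst ?derive_id !(scaler0, scale0r, add0r, addr0) /GRing.scale /= mulr1.
Qed.

Lemma gradSZ c a i : gradS (fun j => c * a j) i = c * gradS a i.
Proof. by rewrite /gradS mulrDr !mulr_sumr. Qed.

Lemma gradS0 a i : (forall j, a j = 0) -> gradS a i = 0.
Proof. by move=> a0; rewrite /gradS !big1 ?addr0. Qed.

Lemma gradS_mulmx (v : 'rV[R]_n) j : gradS (v 0) j = (v *m gramS) 0 j.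
Proof.
rewrite mxE /gradS; under [RHS]eq_bigr do rewrite !mxE mulrDr.
rewrite big_split /=; congr (_ + _); rewrite big_mkcond; apply: eq_bigr => i _.
  by case: ifP; rewrite ?mulr1 ?mulr0.
by case: ifP; rewrite ?mulr1 ?mulr0.
Qed.

End Forms.

Lemma pos_def_comp (R : realType) n (q : ('I_n -> R) -> R)
    (f g : ('I_n -> R) -> 'I_n -> R) :
  (forall x i, g (f x) i = x i) -> (forall y, (forall i, y i = 0) -> forall i, g y i = 0) ->
  pos_def q -> pos_def (fun x => q (f x)).
Proof.
move=> gK g0 q_pd x /exists_neq0P x_neq0; apply/q_pd/exists_neq0P => fx0.
by apply: x_neq0 => i; rewrite -gK g0.
Qed.

Section Forest.
Variables (R : realType) (n : nat) (le : rel 'I_n).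
Hypotheses (le_poset : is_poset le) (le_acyclic : hasse_acyclic le).

Let sum_le_ltS (x : 'I_n -> R) i :
  \sum_(j | le i j) x j = x i + \sum_(j | ltS le i j) x j.
Proof.
case: le_poset => le_refl _ _; rewrite (bigD1 i) ?le_refl //=; congr (_ + _).
by apply: eq_bigl => j; rewrite /ltS andbC eq_sym.
Qed.

Lemma zeta_mobius (x : 'I_n -> R) i : zeta le (mobius le x) i = x i.
Proof.
rewrite /zeta /mobius sumrB sum_le_ltS (exchange_big_dep predT) //=.
under [X in _ - X]eq_bigr do rewrite sumr_const card_cover_between // mulrb.
by rewrite -big_mkcond addrK.
Qed.

Lemma mobius_zeta (y : 'I_n -> R) i : mobius le (zeta le y) i = y i.
Proof.
rewrite /mobius /zeta sum_le_ltS (exchange_big_dep predT) //=.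
under [X in _ - X]eq_bigr do rewrite sumr_const card_covered_between // mulrb.
by rewrite -big_mkcond addrK.
Qed.

Lemma titsS_mobius (x : 'I_n -> R) : titsS le x = fS le (mobius le x).
Proof.
rewrite fS_zeta; under [RHS]eq_bigr do rewrite zeta_mobius mulrBl.
rewrite sumrB /titsS; congr (_ - _); apply: eq_bigr => i _.
by rewrite mulr_suml [RHS]big_mkcond; apply: eq_bigr => j _; case: ifP; rewrite // mulrC.
Qed.

Lemma pos_def_fS_titsS : pos_def (@fS R n le) <-> pos_def (@titsS R n le).
Proof.
have zeta0 (y : 'I_n -> R) : (forall i, y i = 0) -> forall i, zeta le y i = 0.
  by move=> y0 i; rewrite /zeta big1.
have mobius0 (x : 'I_n -> R) : (forall i, x i = 0) -> forall i, mobius le x i = 0.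
  by move=> x0 i; rewrite /mobius big1 // x0 subr0.
have -> : @titsS R n le = fun x => fS le (mobius le x).
  by apply: funext => x; apply: titsS_mobius.
split=> [|tits_pd]; first exact: (pos_def_comp (f := mobius le) zeta_mobius zeta0).
have -> : @fS R n le = fun y => fS le (mobius le (zeta le y)).
  by apply: funext => y; congr (fS le _); apply: funext => i; rewrite mobius_zeta.
exact: (pos_def_comp (f := zeta le) mobius_zeta mobius0 tits_pd).
Qed.

End Forest.

Section Stationary.
Variables (R : realType) (n : nat) (le : rel 'I_n).

Lemma gradS_le_of_min (u : 'I_n -> R) i j :
  inP u -> (forall w, inPbar w -> fS le u <= fS le w) -> gradS le u i <= gradS le u j.
Proof.
move=> [u_gt0 u_sum] u_min; rewrite leNgt; apply/negP => gji.
have nij : i != j by apply: contraTneq gji => ->; rewrite ltxx.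
set B := gradS le u i - gradS le u j.
set h := fun k => (if k == i then 1 else 0) - (if k == j then 1 else 0) : R.
set F := fS le h.
(* Moving mass tau from i to j changes f_S by tau^2 F - tau B < 0. *)
set tau := Num.min (u i) (B / (`|F| + 1)).
have B_gt0 : 0 < B by rewrite subr_gt0.
have F1_gt0 : 0 < `|F| + 1 by rewrite ltr_wpDl.
have tau_gt0 : 0 < tau by rewrite lt_min u_gt0 divr_gt0.
have tau_le : tau * (`|F| + 1) <= B by rewrite -ler_pdivlMr // ge_min lexx orbT.
have polar_hu : polarS le h u = B.
  rewrite /polarS.
  under eq_bigr do rewrite mulrBl !(fun_if (fun v => v * gradS le u _)) !mul1r !mul0r.
  by rewrite sumrB -!big_mkcond !big_pred1_eq.
have w_in : inPbar (fun k => u k + - tau * h k).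
  split=> [k|]; last first.
    by rewrite big_split /= -mulr_sumr sumrB -!big_mkcond !big_pred1_eq subrr mulr0 addr0.
  rewrite /h; case: eqVneq => [->|nki].
    by rewrite (negbTE nij) subr0 mulr1 subr_ge0 ge_min lexx.
  case: eqVneq => [->|nkj]; last by rewrite subrr mulr0 addr0 ltW.
  by rewrite sub0r mulrN1 opprK addr_ge0 // ltW.
have := u_min _ w_in; rewrite fS_shift polar_hu -/F.
have := ler_norm F; nra.
Qed.

Lemma inStt_inSt (u : 'I_n -> R) : inStt (fS le) u -> inSt (fS le) u.
Proof.
case=> u_P _ u_min _; split=> [|i j]; first by case: u_P.
by rewrite !partial_fS; apply/eqP; rewrite eq_le !gradS_le_of_min.
Qed.

Lemma inStZ c (a : 'I_n -> R) : 0 < c -> inSt (fS le) a -> inSt (fS le) (fun i => c * a i).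
Proof.
move=> c_gt0 [a_gt0 a_st]; split=> [i|i j]; first by rewrite mulr_gt0.
by rewrite !partial_fS !gradSZ -!partial_fS (a_st i j).
Qed.

Lemma inSt_normalize (a : 'I_n -> R) :
  (0 < n)%N -> inSt (fS le) a -> exists u : 'I_n -> R, inSt (fS le) u /\ inP u.
Proof.
move=> n_gt0 a_St; have [a_gt0 _] := a_St.
have s_gt0 : 0 < \sum_i a i.
  rewrite (bigD1 (Ordinal n_gt0)) //= ltr_wpDr ?sumr_ge0 // => i _.
  exact: ltW.
exists (fun i => (\sum_k a k)^-1 * a i); split; first by apply: inStZ; rewrite ?invr_gt0.
by split=> [i|]; rewrite ?mulr_gt0 ?invr_gt0 // -mulr_sumr mulVf ?gt_eqF.
Qed.

End Stationary.

Section PositiveDefinite.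
Variables (R : realType) (n : nat) (le : rel 'I_n).
Hypothesis fS_pd : pos_def (@fS R n le).

Lemma fS_gt0 (h : 'I_n -> R) : ~ (forall i, h i = 0) -> 0 < fS le h.
Proof. by move/exists_neq0P; apply: fS_pd. Qed.

Lemma fS_ge0 (h : 'I_n -> R) : 0 <= fS le h.
Proof.
have [h0|/fS_gt0/ltW//] := pselect (forall i, h i = 0).
by rewrite /fS big1 ?lexx // => i _; rewrite big1 // => j _; rewrite h0 mul0r if_same.
Qed.

Lemma gradS_inj (h : 'I_n -> R) : (forall i, gradS le h i = 0) -> forall i, h i = 0.
Proof.
move=> g0; have : fS le h *+ 2 = 0.
  by rewrite -polarSii /polarS big1 // => i _; rewrite g0 mulr0.
by rewrite mulr2n => f0; apply: contrapT => /fS_gt0; lra.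
Qed.

Lemma gradS_surj (b : 'I_n -> R) : exists h, forall j, gradS le h j = b j.
Proof.
have gram_inj (v : 'rV_n) : v *m @gramS R n le = 0 -> v = 0.
  move=> v0; apply/rowP => i; rewrite mxE; move: i; apply: gradS_inj => j.
  by rewrite gradS_mulmx v0 mxE.
have [v vb] := row_inj_surj gram_inj (\row_j b j).
by exists (v 0) => j; rewrite gradS_mulmx vb mxE.
Qed.

Lemma inSt_inP_inStt (u : 'I_n -> R) : inSt (fS le) u -> inP u -> inStt (fS le) u.
Proof.
move=> [_ u_st] u_P; have [u_gt0 u_sum] := u_P.
have u_neq0 : exists i, u i != 0.
  by apply/exists_neq0P => u0; move: u_sum; rewrite big1 // => /esym/eqP; rewrite oner_eq0.
case: (u_neq0) => i0 _.
have shift w : inPbar w -> fS le w = fS le u + fS le (fun k => w k - u k).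
  case=> _ w_sum; rewrite {1}(_ : w = fun k => u k + 1 * (w k - u k)); last first.
    by apply: funext => k; rewrite mul1r addrC subrK.
  rewrite fS_shift mul1r expr1n mul1r /polarS.
  under eq_bigr do rewrite -partial_fS (u_st _ i0).
  by rewrite -mulr_suml sumrB w_sum u_sum subrr mul0r addr0.
split=> // [|w w_P|w w_P w_notP]; first exact: fS_pd.
  by rewrite (shift w) // lerDl fS_ge0.
rewrite (shift w) // ltrDl fS_gt0 // => wu0; apply: w_notP.
suff -> : w = u by [].
by apply: funext => k; apply/eqP; rewrite -subr_eq0 wu0.
Qed.

Lemma inSt_notC (a h : 'I_n -> R) : inSt (fS le) a -> ~ inC (fS le) h.
Proof.
case=> a_gt0 a_st [h_sum [i0 /eqP hi0] h_sign]; apply: hi0; apply: gradS_inj.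
have polar_ah : \sum_i a i * gradS le h i = 0.
  rewrite -/(polarS le a h) polarSC /polarS.
  under eq_bigr do rewrite -partial_fS (a_st _ i0).
  by rewrite -mulr_suml h_sum mul0r.
case: h_sign => h_sign i.
  apply/oppr_inj; rewrite oppr0; move: i; apply: (pos_mul_sum_eq0 a_gt0).
    by move=> i; rewrite oppr_ge0 -partial_fS.
  by under eq_bigr do rewrite mulrN; rewrite sumrN polar_ah oppr0.
by move: i; apply: (pos_mul_sum_eq0 a_gt0) => // i; rewrite -partial_fS.
Qed.

Lemma notC_inSt : (~ exists h, inC (@fS R n le) h) -> exists a, inSt (@fS R n le) a.
Proof.
move=> noC; have [v gv1] := gradS_surj (fun _ => 1).
have [v_gt0|/existsNP[k /negP]] := pselect (forall i, 0 < v i).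
  by exists v; split=> // i j; rewrite !partial_fS !gv1.
rewrite -leNgt => vk_le0.
have sum_v_gt0 : 0 < \sum_i v i.
  have v_neq0 : ~ (forall i, v i = 0).
    by move=> /(gradS0 le k); rewrite gv1 => /eqP; rewrite oner_eq0.
  have := polarSii le v; rewrite /polarS; under eq_bigr do rewrite gv1 mulr1.
  by move=> ->; rewrite pmulrn_lgt0 // fS_gt0.
have [j vj_gt0] : exists j, 0 < v j.
  apply: contrapT => /forallNP v_le0; suff : \sum_i v i <= 0 by lra.
  by apply: sumr_le0 => i _; rewrite leNgt; apply/negP/v_le0.
have nkj : (k == j) = false by apply: contraTF vj_gt0 => /eqP <-; rewrite -leNgt.
have [h gh] :=
  gradS_surj (fun i => (if i == k then v j else 0) - (if i == j then v k else 0)).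
case: noC; exists h; split.
- transitivity (polarS le h v); first by apply: eq_bigr => i _; rewrite gv1 mulr1.
  rewrite polarSC /polarS.
  under eq_bigr do rewrite gh mulrBr !(fun_if (GRing.mul (v _))) !mulr0.
  by rewrite sumrB -!big_mkcond !big_pred1_eq mulrC subrr.
- apply/exists_neq0P => /(gradS0 le k); rewrite gh eqxx nkj subr0 => vj0.
  by move: vj_gt0; rewrite vj0 ltxx.
- right=> i; rewrite partial_fS gh.
  case: eqVneq => [->|_]; first by rewrite nkj subr0 ltW.
  by case: ifP; rewrite ?sub0r ?oppr_ge0 ?subr0.
Qed.

End PositiveDefinite.

Unset Implicit Arguments.

Theorem corollary3 (R : realType) (n : nat) (le : rel 'I_n) :
  (0 < n)%N ->
  is_poset le ->
  hasse_acyclic le ->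
  (pos_def (@fS R n le) \/ pos_def (@titsS R n le)) ->
  [/\ pos_def (@fS R n le), pos_def (@titsS R n le),
      ((~ exists h, inC (@fS R n le) h) <-> (exists u, inStt (@fS R n le) u))
    & ((exists u, inStt (@fS R n le) u) <-> (exists a, inSt (@fS R n le) a))].
Proof.
move=> n_gt0 le_poset le_acyclic fS_or_titsS_pd.
have fS_titsS := pos_def_fS_titsS R le_poset le_acyclic.
have fS_pd : pos_def (@fS R n le) by case: fS_or_titsS_pd => [|/fS_titsS].
have St_Stt (a : 'I_n -> R) : inSt (fS le) a -> exists u, inStt (@fS R n le) u.
  move=> /(inSt_normalize n_gt0) [u [u_St u_P]].
  by exists u; apply: inSt_inP_inStt.
split; [done | exact/fS_titsS | split | split].
- by move=> /(notC_inSt fS_pd) [a /St_Stt].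
- by move=> [u /inStt_inSt u_St] [h]; exact: (inSt_notC fS_pd u_St).
- by move=> [u /inStt_inSt u_St]; exists u.
- by move=> [a /St_Stt].
Qed.
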